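(* Let $C\in\mathbb{R}^{p\times p}$ be positive definite, $w\in\mathbb{R}^p$, $\mu>0$ and $\tau>0$. Let $\mathcal{D}=\{z\in\mathbb{C}^p : |\operatorname{Re} z_j|<\mu,\ j=1,\dots,p\}$ and define on $\mathcal{D}$ the holomorphic function $$H_\tau(z)=(z-w)^TC^{-1}(z-w)-\frac1\tau\sum_{j=1}^p\ln(\mu^2-z_j^2).$$ Then $H_\tau$ has a unique saddle point (critical point) $\hat u_\tau$ in $\mathcal{D}$. This saddle point is real, $\hat u_\tau\in\mathcal{D}\cap\mathbb{R}^p$, and it is a solution $u\in\mathbb{R}^p$ of the system of cubic equations $$(\mu^2-u_j^2)\,[C^{-1}(w-u)]_j-\frac{u_j}{\tau}=0,\qquad j=1,\dots,p.$$
   Context: Here $\ln$ denotes the principal branch of the logarithm; on $\mathcal{D}$ one has $\operatorname{Re}(\mu^2-z_j^2)$ avoiding the branch issues because $|\operatorname{Re} z_j|<\mu$ (equivalently, $\ln(\mu^2-z_j^2)=\ln(\mu-z_j)+\ln(\mu+z_j)$ with both arguments having positive real part). A saddle point means a point $z\in\mathcal{D}$ with $\nabla H_\tau(z)=0$. *)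

From Stdlib Require Import Reals Lra.
Open Scope R_scope.

Definition Cx : Type := (R * R)%type.
Definition Re (z : Cx) : R := fst z.
Definition Im (z : Cx) : R := snd z.
Definition RtoC (x : R) : Cx := (x, 0).
Definition Cadd (a b : Cx) : Cx := (Re a + Re b, Im a + Im b).
Definition Copp (a : Cx) : Cx := (- Re a, - Im a).
Definition Csub (a b : Cx) : Cx := Cadd a (Copp b).
Definition Cmul (a b : Cx) : Cx :=
  (Re a * Re b - Im a * Im b, Re a * Im b + Im a * Re b).
Definition Cinv (a : Cx) : Cx :=
  (Re a / (Re a ^ 2 + Im a ^ 2), - Im a / (Re a ^ 2 + Im a ^ 2)).
Definition Cdiv (a b : Cx) : Cx := Cmul a (Cinv b).
Definition Cmod (a : Cx) : R := sqrt (Re a ^ 2 + Im a ^ 2).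

Definition Carg (z : Cx) : R :=
  let x := Re z in let y := Im z in
  if Rlt_dec 0 x then atan (y / x)
  else if Rlt_dec x 0 then
         (if Rle_dec 0 y then atan (y / x) + PI else atan (y / x) - PI)
  else if Rlt_dec 0 y then PI / 2
  else if Rlt_dec y 0 then - (PI / 2)
  else 0.

Definition Cln (z : Cx) : Cx := (ln (Cmod z), Carg z).

Fixpoint sumR (n : nat) (f : nat -> R) : R :=
  match n with O => 0 | S m => sumR m f + f m end.
Fixpoint sumC (n : nat) (f : nat -> Cx) : Cx :=
  match n with O => RtoC 0 | S m => Cadd (sumC m f) (f m) end.

Definition symmetric (p : nat) (C : nat -> nat -> R) : Prop :=
  forall i j, (i < p)%nat -> (j < p)%nat -> C i j = C j i.

Definition pos_def (p : nat) (C : nat -> nat -> R) : Prop :=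
  symmetric p C /\
  forall x : nat -> R, (exists j, (j < p)%nat /\ x j <> 0) ->
    0 < sumR p (fun i => sumR p (fun k => x i * C i k * x k)).

Definition is_inverse (p : nat) (C Ci : nat -> nat -> R) : Prop :=
  forall i j, (i < p)%nat -> (j < p)%nat ->
    sumR p (fun k => C i k * Ci k j) = (if Nat.eq_dec i j then 1 else 0) /\
    sumR p (fun k => Ci i k * C k j) = (if Nat.eq_dec i j then 1 else 0).

Definition inD (p : nat) (mu : R) (z : nat -> Cx) : Prop :=
  forall j, (j < p)%nat -> Rabs (Re (z j)) < mu.

Definition H_tau (p : nat) (Ci : nat -> nat -> R) (w : nat -> R) (mu tau : R)
  (z : nat -> Cx) : Cx :=
  Csub
    (sumC p (fun i => sumC p (fun k =>
        Cmul (Cmul (Csub (z i) (RtoC (w i))) (RtoC (Ci i k)))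
             (Csub (z k) (RtoC (w k))))))
    (Cmul (RtoC (/ tau))
       (sumC p (fun j => Cln (Csub (RtoC (mu ^ 2)) (Cmul (z j) (z j)))))).

Definition shift (z : nat -> Cx) (j : nat) (h : Cx) : nat -> Cx :=
  fun k => if Nat.eq_dec k j then Cadd (z k) h else z k.

Definition has_cpderiv (F : (nat -> Cx) -> Cx) (z : nat -> Cx) (j : nat) (d : Cx)
  : Prop :=
  forall eps, 0 < eps -> exists delta, 0 < delta /\
    forall h : Cx, 0 < Cmod h < delta ->
      Cmod (Csub (Cdiv (Csub (F (shift z j h)) (F z)) h) d) < eps.

Definition is_critical (p : nat) (F : (nat -> Cx) -> Cx) (z : nat -> Cx) : Prop :=
  forall j, (j < p)%nat -> has_cpderiv F z j (RtoC 0).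

(** The complex partial derivatives of [H_tau] are
    [d_j H(z) = 2 [C^-1 (z - w)]_j + (2/tau) z_j / (mu^2 - z_j^2)]: on the domain
    [mu^2 - z_j^2] has positive real part, where the principal logarithm is
    holomorphic with derivative [1/v].  At a critical point, the imaginary part
    [y] of [z] then satisfies [2 y^T C^-1 y + sum_j c_j y_j^2 = 0] with every
    [c_j > 0], hence [y = 0] because [C^-1] is positive semidefinite.  On the
    real cube the equations read [C^-1 (x - w) + g(x) / tau = 0] with
    [g t = t / (mu^2 - t^2)], and [(t - s) (g t - g s) >= (t - s)^2 / mu^2]
    makes the left-hand side strongly monotone, which gives uniqueness.  For
    existence, [psi t = lam t + g t / tau] is an increasing bijection from
    [(-mu, mu)] onto [R]; for [lam] large the map
    [x |-> psi^-1 (lam x - C^-1 (x - w))] is a contraction for the Euclidean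
    norm, and its fixed point solves the equations. *)

From Coquelicot Require Import Coquelicot.
From Stdlib Require Import Reals Lra Lia Psatz ClassicalEpsilon.
From Pilot Require Import Defs.
Open Scope R_scope.

(** * Complex sums *)

(* [Cx] and its operations are definitionally Coquelicot's [C]. *)
Ltac to_C :=
  repeat match goal with
  | |- context [Cadd ?a ?b] => change (Cadd a b) with (Complex.Cplus a b)
  | |- context [Csub ?a ?b] => change (Csub a b) with (Complex.Cminus a b)
  | |- context [Cmul ?a ?b] => change (Cmul a b) with (Complex.Cmult a b)
  | |- context [Defs.Cdiv ?a ?b] => change (Defs.Cdiv a b) with (Complex.Cdiv a b)
  | |- context [Defs.Cinv ?a] => change (Defs.Cinv a) with (Complex.Cinv a)
  | |- context [Defs.Copp ?a] => change (Defs.Copp a) with (Complex.Copp a)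
  | |- context [Defs.RtoC ?a] => change (Defs.RtoC a) with (Complex.RtoC a)
  | |- context [Defs.Cmod ?a] => change (Defs.Cmod a) with (Complex.Cmod a)
  end;
  try match goal with |- @eq _ ?a ?b => change (@eq Complex.C a b) end.
Ltac cring := to_C; ring.

Local Open Scope C_scope.
Local Notation C0 := (Complex.RtoC 0).

Lemma sumC_ext n (f g : nat -> Complex.C) :
  (forall k, (k < n)%nat -> f k = g k) -> sumC n f = sumC n g.
Proof.
  induction n as [|n IH]; intros H; simpl; [reflexivity|].
  rewrite IH by (intros; apply H; lia); rewrite H by lia; reflexivity.
Qed.

Lemma sumC_add n (f g : nat -> Complex.C) : sumC n (fun k => f k + g k) = sumC n f + sumC n g.
Proof.
  induction n as [|n IH]; simpl.
  - apply injective_projections; simpl; lra.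
  - to_C; rewrite IH; ring.
Qed.

Lemma sumC_scal n (c : Complex.C) (f : nat -> Complex.C) : sumC n (fun k => c * f k) = c * sumC n f.
Proof. induction n as [|n IH]; simpl; to_C; [|rewrite IH]; ring. Qed.

Lemma sumC_0 n : sumC n (fun _ => C0) = C0.
Proof. induction n as [|n IH]; simpl; to_C; [|rewrite IH]; ring. Qed.

Lemma sumC_delta n j (f : nat -> Complex.C) : (j < n)%nat ->
  sumC n (fun k => if Nat.eq_dec k j then f k else C0) = f j.
Proof.
  induction n as [|n IH]; intros Hj; [lia|]; simpl; to_C.
  destruct (Nat.eq_dec n j) as [->|Hnj].
  - rewrite (sumC_ext _ _ (fun _ => C0)), sumC_0; [ring|].
    intros k Hk; destruct (Nat.eq_dec k j); [lia|reflexivity].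
  - rewrite IH by lia; ring.
Qed.

Lemma sumC_sub_single n j (f g : nat -> Complex.C) : (j < n)%nat ->
  (forall k, (k < n)%nat -> k <> j -> f k = g k) ->
  sumC n f - sumC n g = f j - g j.
Proof.
  intros Hj H.
  rewrite (sumC_ext _ f (fun k => g k + (if Nat.eq_dec k j then f k - g k else C0))).
  - rewrite sumC_add, sumC_delta by exact Hj; ring.
  - intros k Hk; destruct (Nat.eq_dec k j) as [->|]; [ring|rewrite H by auto; ring].
Qed.

Lemma fst_sumC n f : fst (sumC n f) = sumR n (fun k => fst (f k)).
Proof. induction n as [|n IH]; simpl; [|rewrite <- IH]; reflexivity. Qed.

Lemma snd_sumC n f : snd (sumC n f) = sumR n (fun k => snd (f k)).
Proof. induction n as [|n IH]; simpl; [|rewrite <- IH]; reflexivity. Qed.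

(** * A second-order estimate for the principal logarithm *)

Lemma abs_fst_le_Cmod (z : Complex.C) : (Rabs (fst z) <= Complex.Cmod z)%R.
Proof. pose proof (Rmax_Cmod z); pose proof (Rmax_l (Rabs (fst z)) (Rabs (snd z))); lra. Qed.

Lemma abs_snd_le_Cmod (z : Complex.C) : (Rabs (snd z) <= Complex.Cmod z)%R.
Proof. pose proof (Rmax_Cmod z); pose proof (Rmax_r (Rabs (fst z)) (Rabs (snd z))); lra. Qed.

Lemma fst_le_Cmod (z : Complex.C) : (fst z <= Complex.Cmod z)%R.
Proof. pose proof (abs_fst_le_Cmod z); pose proof (Rle_abs (fst z)); lra. Qed.

Lemma Cmod_le_abs_fst_snd (z : Complex.C) :
  (Complex.Cmod z <= Rabs (fst z) + Rabs (snd z))%R.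
Proof.
  pose proof (Rabs_pos (fst z)); pose proof (Rabs_pos (snd z)).
  unfold Complex.Cmod; rewrite <- (sqrt_Rsqr (Rabs (fst z) + Rabs (snd z))) by lra.
  apply sqrt_le_1_alt; unfold Rsqr.
  rewrite <- (pow2_abs (fst z)), <- (pow2_abs (snd z)); nra.
Qed.

Lemma Cln_re_pos (v : Complex.C) : (0 < fst v)%R ->
  Cln v = (ln (Complex.Cmod v), atan (snd v / fst v))%R.
Proof. intros Hv; unfold Cln, Carg, Re, Im; destruct (Rlt_dec 0 (fst v)); [reflexivity|lra]. Qed.

Section Segment.

Variables a b k1 k2 : R.

Let v : Complex.C := (a, b).
Let k : Complex.C := (k1, k2).

Lemma segment_eq (t : R) : v + t * k = (a + t * k1, b + t * k2)%R.
Proof. apply injective_projections; simpl; ring. Qed.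

Lemma derive_ln_Cmod_segment (t : R) : (0 < a + t * k1)%R ->
  derivable_pt_lim (fun s => ln (Complex.Cmod (v + s * k))) t (fst (k / (v + t * k))).
Proof.
  intros Ht; apply is_derive_Reals.
  apply (is_derive_ext (fun s => ln (sqrt ((a + s * k1) ^ 2 + (b + s * k2) ^ 2)))).
  { intros s; rewrite segment_eq; reflexivity. }
  rewrite segment_eq; unfold k; simpl.
  assert (Hq : (0 < (a + t * k1) * ((a + t * k1) * 1) + (b + t * k2) * ((b + t * k2) * 1))%R).
  { rewrite !Rmult_1_r; pose proof (Rle_0_sqr (b + t * k2)); unfold Rsqr in *; nra. }
  auto_derive; [repeat split; [exact Hq|apply sqrt_lt_R0, Hq]|].
  set (Q := ((a + t * k1) * ((a + t * k1) * 1) + (b + t * k2) * ((b + t * k2) * 1))%R) in *.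
  assert (Hs : (sqrt Q * sqrt Q = Q)%R) by (apply sqrt_sqrt; lra).
  pose proof (sqrt_lt_R0 Q Hq).
  clearbody Q; rewrite <- Hs at 3 4.
  field; lra.
Qed.

Lemma derive_atan_segment (t : R) : (0 < a + t * k1)%R ->
  derivable_pt_lim (fun s => atan (snd (v + s * k) / fst (v + s * k))) t
    (snd (k / (v + t * k))).
Proof.
  intros Ht; apply is_derive_Reals.
  apply (is_derive_ext (fun s => atan ((b + s * k2) / (a + s * k1)))).
  { intros s; rewrite segment_eq; reflexivity. }
  rewrite segment_eq; unfold k; simpl.
  auto_derive; [lra|].
  field; split; [|lra].
  pose proof (Rle_0_sqr (b + t * k2)); unfold Rsqr in *; nra.
Qed.

End Segment.

Lemma fst_Cplus (x y : Complex.C) : fst (x + y) = (fst x + fst y)%R.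
Proof. reflexivity. Qed.

Lemma snd_Cplus (x y : Complex.C) : snd (x + y) = (snd x + snd y)%R.
Proof. reflexivity. Qed.

Lemma fst_Cminus (x y : Complex.C) : fst (x - y) = (fst x - fst y)%R.
Proof. reflexivity. Qed.

Lemma snd_Cminus (x y : Complex.C) : snd (x - y) = (snd x - snd y)%R.
Proof. reflexivity. Qed.

Lemma fst_segment_lower (v k : Complex.C) (t : R) : (0 <= t <= 1)%R ->
  (fst v - Complex.Cmod k <= fst ((v + t * k)%C))%R.
Proof.
  intros Ht; pose proof (abs_fst_le_Cmod k).
  assert (Rabs (t * fst k) <= Rabs (fst k))%R.
  { rewrite Rabs_mult, (Rabs_right t) by lra; pose proof (Rabs_pos (fst k)); nra. }
  pose proof (Rle_abs (- (t * fst k))); rewrite Rabs_Ropp in *.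
  simpl; lra.
Qed.

Lemma Cdiv_segment_bound (v k : Complex.C) (c : R) :
  (0 < fst v)%R -> (Complex.Cmod k <= fst v / 2)%R -> (0 <= c <= 1)%R ->
  (Complex.Cmod ((k / (v + c * k) - k / v)%C) <= 2 / fst v ^ 2 * Complex.Cmod k ^ 2)%R.
Proof.
  intros Hv Hk Hc.
  assert (Hm1 : (fst v / 2 <= Complex.Cmod ((v + c * k)%C))%R).
  { pose proof (fst_le_Cmod ((v + c * k)%C)); pose proof (fst_segment_lower v k c Hc); lra. }
  assert (Hn1 : v + c * k <> 0) by (intros E; rewrite E, Cmod_0 in Hm1; lra).
  assert (Hn2 : v <> 0) by (intros E; rewrite E in Hv; simpl in Hv; lra).
  replace (k / (v + c * k) - k / v) with (- (c * k * k) / ((v + c * k) * v)) by (field; auto).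
  rewrite Cmod_div by (apply Cmult_neq_0; auto).
  rewrite Cmod_opp, !Cmod_mult, Cmod_R, (Rabs_right c) by lra.
  pose proof (Cmod_ge_0 k); pose proof (fst_le_Cmod v).
  apply Rle_div_l; [nra|].
  assert (HB : (2 / fst v ^ 2 * Complex.Cmod k ^ 2 * (fst v / 2 * fst v)
                <= 2 / fst v ^ 2 * Complex.Cmod k ^ 2 * (Complex.Cmod ((v + c * k)%C) * Complex.Cmod v))%R).
  { apply Rmult_le_compat_l; [|nra].
    apply Rmult_le_pos; [|nra]; apply Rdiv_le_0_compat; nra. }
  replace (2 / fst v ^ 2 * Complex.Cmod k ^ 2 * (fst v / 2 * fst v))%R
    with (Complex.Cmod k ^ 2)%R in HB by (field; lra).
  nra.
Qed.

(* Mean value theorem on [t |-> Cln (v + t k)], separately for the real and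
   imaginary parts; [Re (v + t k) > 0] keeps the segment off the branch cut. *)
Lemma Cln_second_order (v k : Complex.C) :
  (0 < fst v)%R -> (Complex.Cmod k <= fst v / 2)%R ->
  (Complex.Cmod ((Cln (v + k) - Cln v - k / v)%C) <= 4 / fst v ^ 2 * Complex.Cmod k ^ 2)%R.
Proof.
  intros Hv Hk.
  assert (Hpos : forall t, (0 <= t <= 1)%R -> (0 < fst ((v + t * k)%C))%R).
  { intros t Ht; pose proof (fst_segment_lower v k t Ht); lra. }
  set (F1 t := ln (Complex.Cmod ((v + t * k)%C))).
  set (F2 t := (atan (snd ((v + t * k)%C) / fst ((v + t * k)%C)))%R).
  assert (HF : forall t, (0 <= t <= 1)%R -> Cln (v + t * k) = (F1 t, F2 t)).
  { intros t Ht; apply Cln_re_pos, Hpos, Ht. }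
  destruct v as [a b], k as [k1 k2].
  destruct (MVT_cor2 F1 (fun t => fst (((k1, k2) / ((a, b) + t * (k1, k2)))%C)) 0 1)
    as [c1 [E1 Hc1]]; [lra| |].
  { intros t Ht; apply derive_ln_Cmod_segment; specialize (Hpos t); simpl in Hpos; nra. }
  destruct (MVT_cor2 F2 (fun t => snd (((k1, k2) / ((a, b) + t * (k1, k2)))%C)) 0 1)
    as [c2 [E2 Hc2]]; [lra| |].
  { intros t Ht; apply derive_atan_segment; specialize (Hpos t); simpl in Hpos; nra. }
  assert (H0 : (a, b) + 0 * (k1, k2) = (a, b)) by (apply injective_projections; simpl; ring).
  assert (H1 : (a, b) + 1 * (k1, k2) = (a, b) + (k1, k2)) by (apply injective_projections; simpl; ring).
  assert (HC0 : Cln (a, b) = (F1 0%R, F2 0%R)) by (rewrite <- HF, H0; [reflexivity|lra]).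
  assert (HC1 : Cln ((a, b) + (k1, k2)) = (F1 1%R, F2 1%R)) by (rewrite <- HF, H1; [reflexivity|lra]).
  rewrite HC0, HC1.
  set (G1 := (k1, k2) / ((a, b) + c1 * (k1, k2)) - (k1, k2) / (a, b)).
  set (G2 := (k1, k2) / ((a, b) + c2 * (k1, k2)) - (k1, k2) / (a, b)).
  set (E := (F1 1%R, F2 1%R) - (F1 0%R, F2 0%R) - (k1, k2) / (a, b)).
  assert (Hkv : (k1, k2) / (a, b) = (k1, k2) / ((a, b) + 0 * (k1, k2))) by (rewrite H0; reflexivity).
  assert (HE1 : fst E = fst G1).
  { unfold E, G1; rewrite Hkv, !fst_Cminus; cbn [fst]; lra. }
  assert (HE2 : snd E = snd G2).
  { unfold E, G2; rewrite Hkv, !snd_Cminus; cbn [snd]; lra. }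
  pose proof (Cmod_le_abs_fst_snd E).
  pose proof (abs_fst_le_Cmod G1); pose proof (abs_snd_le_Cmod G2).
  pose proof (Cdiv_segment_bound (a, b) (k1, k2) c1 Hv Hk ltac:(lra)) as B1.
  pose proof (Cdiv_segment_bound (a, b) (k1, k2) c2 Hv Hk ltac:(lra)) as B2.
  fold G1 in B1; fold G2 in B2; rewrite HE1, HE2 in *; simpl fst in *; lra.
Qed.

(** * Partial derivatives of [H_tau] *)

Lemma has_cpderiv_of_quadratic_error F z j (d : Complex.C) (r K : R) :
  (0 < r)%R -> (0 <= K)%R ->
  (forall h : Complex.C, (0 < Complex.Cmod h < r)%R ->
     (Complex.Cmod (F (shift z j h) - F z - h * d) <= K * Complex.Cmod h ^ 2)%R) ->
  has_cpderiv F z j d.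
Proof.
  intros Hr HK H eps Heps.
  exists (Rmin r (eps / (K + 1))); split.
  { apply Rmin_pos; [lra|apply Rdiv_lt_0_compat; lra]. }
  intros h Hh; to_C; change (Defs.Cmod h) with (Complex.Cmod h) in Hh.
  pose proof (Rmin_l r (eps / (K + 1))); pose proof (Rmin_r r (eps / (K + 1))).
  assert (Hh0 : h <> C0) by (intros E; rewrite E, Cmod_0 in Hh; lra).
  replace ((F (shift z j h) - F z) / h - d) with ((F (shift z j h) - F z - h * d) / h)
    by (field; exact Hh0).
  rewrite Cmod_div by exact Hh0.
  specialize (H h ltac:(lra)).
  apply Rle_lt_trans with (K * Complex.Cmod h)%R.
  { apply Rle_div_l; [lra|]; simpl in H; nra. }
  assert (K * Complex.Cmod h <= K * (eps / (K + 1)))%R by (apply Rmult_le_compat_l; lra).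
  assert (K * (eps / (K + 1)) < eps)%R.
  { apply (Rmult_lt_reg_r (K + 1)); [lra|]; field_simplify; nra. }
  lra.
Qed.

Lemma has_cpderiv_unique F z j (d1 d2 : Complex.C) :
  has_cpderiv F z j d1 -> has_cpderiv F z j d2 -> d1 = d2.
Proof.
  intros H1 H2.
  assert (Hsmall : forall eps, (0 < eps)%R -> (Complex.Cmod (d1 - d2) < 2 * eps)%R).
  { intros eps Heps.
    destruct (H1 eps Heps) as [r1 [Hr1 K1]], (H2 eps Heps) as [r2 [Hr2 K2]].
    set (t := (Rmin r1 r2 / 2)%R).
    pose proof (Rmin_pos r1 r2 Hr1 Hr2); pose proof (Rmin_l r1 r2); pose proof (Rmin_r r1 r2).
    assert (Ht : Defs.Cmod (Complex.RtoC t) = t).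
    { change (Complex.Cmod (Complex.RtoC t) = t); rewrite Cmod_R; apply Rabs_right; unfold t; lra. }
    specialize (K1 (Complex.RtoC t) ltac:(rewrite Ht; unfold t; lra)).
    specialize (K2 (Complex.RtoC t) ltac:(rewrite Ht; unfold t; lra)).
    set (Q := Defs.Cdiv (Csub (F (shift z j (Complex.RtoC t))) (F z)) (Complex.RtoC t)) in *.
    change (Defs.Cmod (Csub Q d1)) with (Complex.Cmod (Q - d1)) in K1.
    change (Defs.Cmod (Csub Q d2)) with (Complex.Cmod (Q - d2)) in K2.
    replace (d1 - d2) with ((Q - d2) + - (Q - d1)) by ring.
    eapply Rle_lt_trans; [apply Cmod_triangle|]; rewrite Cmod_opp; lra. }
  assert (Hd : Complex.Cmod (d1 - d2) = 0%R).
  { pose proof (Cmod_ge_0 (d1 - d2)).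
    destruct (Req_dec (Complex.Cmod (d1 - d2)) 0) as [|Hne]; [assumption|].
    specialize (Hsmall (Complex.Cmod (d1 - d2) / 4)%R ltac:(lra)); lra. }
  apply Cmod_eq_0 in Hd.
  replace d2 with (d1 - (d1 - d2)) by ring; rewrite Hd; ring.
Qed.

Definition quadC (p : nat) (Ci : nat -> nat -> R) (w : nat -> R) (z : nat -> Cx) : Cx :=
  sumC p (fun i => sumC p (fun k =>
    Cmul (Cmul (Csub (z i) (RtoC (w i))) (RtoC (Ci i k))) (Csub (z k) (RtoC (w k))))).

Definition logsum (p : nat) (mu : R) (z : nat -> Cx) : Cx :=
  sumC p (fun j => Cln (Csub (RtoC (mu ^ 2)) (Cmul (z j) (z j)))).

Lemma H_tau_quadC_logsum p Ci w mu tau z :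
  H_tau p Ci w mu tau z = quadC p Ci w z - (/ tau)%R * logsum p mu z.
Proof. reflexivity. Qed.

Lemma quadC_shift p Ci w z j h : (j < p)%nat ->
  quadC p Ci w (shift z j h) - quadC p Ci w z =
  h * (sumC p (fun k => Ci j k * (z k - w k)) + sumC p (fun i => (z i - w i) * Ci i j)
       + h * Ci j j).
Proof.
  intros Hj.
  set (a i := z i - w i).
  change (quadC p Ci w z) with (sumC p (fun i => sumC p (fun k => a i * Ci i k * a k))).
  unfold quadC.
  set (d i := if Nat.eq_dec i j then h else C0).
  assert (Hs : forall i, Csub (shift z j h i) (RtoC (w i)) = a i + d i).
  { intros i; unfold shift, a, d; destruct (Nat.eq_dec i j); cring. }
  rewrite (sumC_ext _ _ (fun i => sumC p (fun k => a i * Ci i k * a k)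
      + (if Nat.eq_dec i j then h * sumC p (fun k => Ci i k * (a k + d k)) else C0)
      + sumC p (fun k => if Nat.eq_dec k j then a i * Ci i k * h else C0))).
  2:{ intros i Hi; destruct (Nat.eq_dec i j).
      - rewrite <- sumC_scal, <- !sumC_add; apply sumC_ext; intros k Hk.
        rewrite !Hs; unfold d; destruct (Nat.eq_dec k j), (Nat.eq_dec i j); try lia; unfold a; cring.
      - rewrite Cplus_0_r, <- sumC_add; apply sumC_ext; intros k Hk.
        rewrite !Hs; unfold d; destruct (Nat.eq_dec k j), (Nat.eq_dec i j); try lia; unfold a; cring. }
  rewrite !sumC_add, sumC_delta by exact Hj.
  rewrite (sumC_ext p (fun i => sumC p (fun k => if Nat.eq_dec k j then a i * Ci i k * h else C0))
     (fun i => h * (a i * Ci i j))).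
  2:{ intros i Hi; rewrite (sumC_delta p j (fun k => a i * Ci i k * h)) by exact Hj; ring. }
  rewrite (sumC_ext p (fun k => Ci j k * (a k + d k))
     (fun k => Ci j k * a k + (if Nat.eq_dec k j then Ci j k * h else C0))).
  2:{ intros k Hk; unfold d; destruct (Nat.eq_dec k j); cring. }
  rewrite sumC_add, sumC_delta, sumC_scal by exact Hj.
  unfold a; cring.
Qed.

Lemma logsum_shift p mu z j h : (j < p)%nat ->
  logsum p mu (shift z j h) - logsum p mu z =
  Cln ((mu ^ 2)%R - (z j + h) * (z j + h)) - Cln ((mu ^ 2)%R - z j * z j).
Proof.
  intros Hj; unfold logsum; rewrite (sumC_sub_single p j) by
    (exact Hj || (intros k Hk Hkj; unfold shift; destruct (Nat.eq_dec k j); [lia|reflexivity])).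
  unfold shift; destruct (Nat.eq_dec j j); [reflexivity|lia].
Qed.

Definition dH p (Ci : nat -> nat -> R) (w : nat -> R) (mu tau : R) (z : nat -> Cx) j
  : Complex.C :=
  sumC p (fun k => Ci j k * (z k - w k)) + sumC p (fun i => (z i - w i) * Ci i j)
  + (/ tau)%R * (2 * z j / ((mu ^ 2)%R - z j * z j)).

(* [mu^2 - (z_j + h)^2 = v + k] with [v := mu^2 - z_j^2] and
   [k := -(2 z_j h + h^2)], so the log term contributes its Taylor remainder at [v]. *)
Lemma H_tau_shift_remainder p Ci w mu tau z j h : (j < p)%nat ->
  (mu ^ 2)%R - z j * z j <> C0 ->
  H_tau p Ci w mu tau (shift z j h) - H_tau p Ci w mu tau z - h * dH p Ci w mu tau z j =
  h * h * Ci j j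
  - (/ tau)%R * (Cln (((mu ^ 2)%R - z j * z j) + - (2 * z j * h + h * h))
                 - Cln ((mu ^ 2)%R - z j * z j)
                 - - (2 * z j * h + h * h) / ((mu ^ 2)%R - z j * z j))
  + (/ tau)%R * (h * h / ((mu ^ 2)%R - z j * z j)).
Proof.
  intros Hj Hv; rewrite !H_tau_quadC_logsum.
  transitivity ((quadC p Ci w (shift z j h) - quadC p Ci w z)
                - (/ tau)%R * (logsum p mu (shift z j h) - logsum p mu z)
                - h * dH p Ci w mu tau z j); [cring|].
  rewrite quadC_shift, logsum_shift by exact Hj.
  replace ((mu ^ 2)%R - z j * z j + - (2 * z j * h + h * h))
    with ((mu ^ 2)%R - (z j + h) * (z j + h)) by ring.
  unfold dH; field; exact Hv.
Qed.

Lemma fst_mu2_minus_sq_pos (mu : R) (x : Complex.C) : (Rabs (fst x) < mu)%R ->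
  (0 < fst (((mu ^ 2)%R - x * x)%C))%R.
Proof.
  intros Hx; destruct x as [a b]; simpl in *.
  pose proof (Rabs_pos a); pose proof (Rle_0_sqr b); unfold Rsqr in *.
  assert (a ^ 2 < mu ^ 2)%R by (rewrite <- (pow2_abs a); nra).
  nra.
Qed.

Lemma Cmod_linear_quadratic_le (x h : Complex.C) : (Complex.Cmod h <= 1)%R ->
  (Complex.Cmod ((2 * x * h + h * h)%C) <= Complex.Cmod h * (2 * Complex.Cmod x + 1))%R.
Proof.
  intros Hh; replace (2 * x * h + h * h) with (h * (2 * x + h)) by ring.
  rewrite Cmod_mult; apply Rmult_le_compat_l; [apply Cmod_ge_0|].
  eapply Rle_trans; [apply Cmod_triangle|]; rewrite Cmod_mult.
  replace (Complex.Cmod 2) with 2%R by (rewrite Cmod_R, Rabs_right; lra); lra.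
Qed.

Lemma Cln_remainder_quadratic (v x h : Complex.C) :
  (0 < fst v)%R -> (Complex.Cmod h <= 1)%R ->
  (Complex.Cmod h <= fst v / (2 * (2 * Complex.Cmod x + 1)))%R ->
  (Complex.Cmod ((Cln (v + - (2 * x * h + h * h)) - Cln v - - (2 * x * h + h * h) / v)%C)
   <= 4 / fst v ^ 2 * (2 * Complex.Cmod x + 1) ^ 2 * Complex.Cmod h ^ 2)%R.
Proof.
  intros Hv Hh1 Hh.
  set (M := (2 * Complex.Cmod x + 1)%R) in *.
  assert (HM : (1 <= M)%R) by (unfold M; pose proof (Cmod_ge_0 x); lra).
  set (k := - (2 * x * h + h * h)).
  assert (Hk : (Complex.Cmod k <= Complex.Cmod h * M)%R).
  { unfold k; rewrite Cmod_opp; apply Cmod_linear_quadratic_le, Hh1. }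
  assert (Hka : (Complex.Cmod k <= fst v / 2)%R).
  { eapply Rle_trans; [exact Hk|].
    apply (Rmult_le_reg_r (/ M)); [apply Rinv_0_lt_compat; lra|].
    rewrite Rmult_assoc, Rinv_r, Rmult_1_r by lra.
    replace (fst v / 2 * / M)%R with (fst v / (2 * M))%R by (field; lra); lra. }
  eapply Rle_trans; [exact (Cln_second_order v k Hv Hka)|].
  assert (Complex.Cmod k ^ 2 <= Complex.Cmod h ^ 2 * M ^ 2)%R.
  { rewrite <- Rpow_mult_distr; apply pow_incr; split; [apply Cmod_ge_0|exact Hk]. }
  assert (0 < 4 / fst v ^ 2)%R by (apply Rdiv_lt_0_compat; [lra|apply pow_lt, Hv]).
  nra.
Qed.

Lemma H_tau_has_cpderiv p Ci w mu tau z j : (j < p)%nat -> (0 < tau)%R ->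
  (Rabs (fst (z j)) < mu)%R ->
  has_cpderiv (H_tau p Ci w mu tau) z j (dH p Ci w mu tau z j).
Proof.
  intros Hj Ht Hz.
  set (v := (mu ^ 2)%R - z j * z j).
  set (a := fst v).
  assert (Ha : (0 < a)%R) by exact (fst_mu2_minus_sq_pos mu (z j) Hz).
  assert (Hv : v <> C0) by (intros E; unfold a in Ha; rewrite E in Ha; simpl in Ha; lra).
  assert (Hav : (a <= Complex.Cmod v)%R) by apply fst_le_Cmod.
  set (M := (2 * Complex.Cmod (z j) + 1)%R).
  assert (HM : (1 <= M)%R) by (unfold M; pose proof (Cmod_ge_0 (z j)); lra).
  assert (Hit : (0 < / tau)%R) by (apply Rinv_0_lt_compat; lra).
  set (K := (4 / a ^ 2 * M ^ 2)%R).
  assert (HK : (0 <= K)%R)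
    by (apply Rmult_le_pos; [apply Rdiv_le_0_compat; [lra|apply pow_lt, Ha]|nra]).
  apply (has_cpderiv_of_quadratic_error _ _ _ _ (Rmin 1 (a / (2 * M)))
        (Rabs (Ci j j) + / tau * K + / tau * / Complex.Cmod v)).
  { apply Rmin_pos; [lra|apply Rdiv_lt_0_compat; lra]. }
  { pose proof (Rabs_pos (Ci j j)).
    assert (0 < / Complex.Cmod v)%R by (apply Rinv_0_lt_compat; lra).
    nra. }
  intros h Hh; pose proof (Rmin_l 1 (a / (2 * M))); pose proof (Rmin_r 1 (a / (2 * M))).
  rewrite H_tau_shift_remainder by exact Hj || exact Hv; fold v.
  pose proof (Cln_remainder_quadratic v (z j) h Ha ltac:(lra) ltac:(fold a M; lra)) as Hlog.
  fold a M K in Hlog.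
  eapply Rle_trans; [apply Cmod_triangle|].
  eapply Rle_trans; [apply Rplus_le_compat_r, Cmod_triangle|].
  rewrite Cmod_opp, !Cmod_mult, !Cmod_R, (Rabs_right (/ tau)) by lra.
  rewrite Cmod_div, Cmod_mult by exact Hv.
  replace (/ tau * (Complex.Cmod h * Complex.Cmod h / Complex.Cmod v))%R
    with (/ tau * / Complex.Cmod v * Complex.Cmod h ^ 2)%R by (field; lra).
  pose proof (Cmod_ge_0 h); simpl pow in *; nra.
Qed.

Local Close Scope C_scope.

(** * Real sums and the inverse matrix *)

Lemma sumR_ext n f g : (forall k, (k < n)%nat -> f k = g k) -> sumR n f = sumR n g.
Proof.
  induction n as [|n IH]; intros H; simpl; [reflexivity|].
  rewrite IH by (intros; apply H; lia); rewrite H by lia; reflexivity.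
Qed.

Lemma sumR_add n f g : sumR n (fun k => f k + g k) = sumR n f + sumR n g.
Proof. induction n as [|n IH]; simpl; [|rewrite IH]; ring. Qed.

Lemma sumR_sub n f g : sumR n (fun k => f k - g k) = sumR n f - sumR n g.
Proof. induction n as [|n IH]; simpl; [|rewrite IH]; ring. Qed.

Lemma sumR_scal n c f : sumR n (fun k => c * f k) = c * sumR n f.
Proof. induction n as [|n IH]; simpl; [|rewrite IH]; ring. Qed.

Lemma sumR_scal_r n c f : sumR n (fun k => f k * c) = sumR n f * c.
Proof. induction n as [|n IH]; simpl; [|rewrite IH]; ring. Qed.

Lemma sumR_const n c : sumR n (fun _ => c) = INR n * c.
Proof. induction n as [|n IH]; [simpl; ring|]; rewrite S_INR; simpl; rewrite IH; ring. Qed.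

Lemma sumR_swap n m f :
  sumR n (fun i => sumR m (fun k => f i k)) = sumR m (fun k => sumR n (fun i => f i k)).
Proof.
  induction n as [|n IH]; simpl.
  - rewrite (sumR_const m 0); ring.
  - rewrite IH, <- sumR_add; reflexivity.
Qed.

Lemma sumR_delta n j f : (j < n)%nat ->
  sumR n (fun k => (if Nat.eq_dec k j then 1 else 0) * f k) = f j.
Proof.
  induction n as [|n IH]; intros Hj; [lia|]; simpl.
  destruct (Nat.eq_dec n j) as [->|Hnj].
  - rewrite (sumR_ext _ _ (fun _ => 0)), sumR_const; [ring|].
    intros k Hk; destruct (Nat.eq_dec k j); [lia|ring].
  - rewrite IH by lia; ring.
Qed.

Lemma sumR_nonneg n f : (forall k, (k < n)%nat -> 0 <= f k) -> 0 <= sumR n f.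
Proof.
  induction n as [|n IH]; intros H; simpl; [lra|].
  pose proof (H n ltac:(lia)); pose proof (IH ltac:(intros; apply H; lia)); lra.
Qed.

Lemma sumR_le n f g : (forall k, (k < n)%nat -> f k <= g k) -> sumR n f <= sumR n g.
Proof.
  induction n as [|n IH]; intros H; simpl; [lra|].
  pose proof (H n ltac:(lia)); pose proof (IH ltac:(intros; apply H; lia)); lra.
Qed.

Lemma sumR_term_le n f j : (forall k, (k < n)%nat -> 0 <= f k) -> (j < n)%nat ->
  f j <= sumR n f.
Proof.
  induction n as [|n IH]; intros H Hj; simpl; [lia|].
  pose proof (H n ltac:(lia)); pose proof (sumR_nonneg n f ltac:(intros; apply H; lia)).
  destruct (Nat.eq_dec j n) as [->|]; [lra|].
  pose proof (IH ltac:(intros; apply H; lia) ltac:(lia)); lra.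
Qed.

Lemma sumR_nonneg_eq0 n f : (forall k, (k < n)%nat -> 0 <= f k) -> sumR n f = 0 ->
  forall k, (k < n)%nat -> f k = 0.
Proof.
  intros H E k Hk; pose proof (sumR_term_le n f k H Hk); pose proof (H k Hk); lra.
Qed.

Lemma sumR_abs n f : Rabs (sumR n f) <= sumR n (fun k => Rabs (f k)).
Proof.
  induction n as [|n IH]; simpl; [rewrite Rabs_R0; lra|].
  eapply Rle_trans; [apply Rabs_triang|lra].
Qed.

Definition qform (p : nat) (A : nat -> nat -> R) (x : nat -> R) : R :=
  sumR p (fun i => sumR p (fun k => x i * A i k * x k)).

Definition matvec (p : nat) (A : nat -> nat -> R) (x : nat -> R) (i : nat) : R :=
  sumR p (fun k => A i k * x k).

Lemma qform_matvec p A x : qform p A x = sumR p (fun i => x i * matvec p A x i).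
Proof.
  apply sumR_ext; intros i _; unfold matvec; rewrite <- sumR_scal.
  apply sumR_ext; intros; ring.
Qed.

Lemma matvec_inverse_l p C Ci x : is_inverse p C Ci ->
  forall i, (i < p)%nat -> matvec p C (matvec p Ci x) i = x i.
Proof.
  intros HI i Hi; unfold matvec.
  rewrite (sumR_ext _ _ (fun l => sumR p (fun k => C i l * Ci l k * x k)))
    by (intros; rewrite <- sumR_scal; apply sumR_ext; intros; ring).
  rewrite sumR_swap, <- (sumR_delta p i x Hi).
  apply sumR_ext; intros k Hk.
  rewrite sumR_scal_r, (proj1 (HI i k Hi Hk)).
  destruct (Nat.eq_dec i k), (Nat.eq_dec k i); try lia; ring.
Qed.

Lemma inverse_symmetric p C Ci : symmetric p C -> is_inverse p C Ci -> symmetric p Ci.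
Proof.
  intros HC HI i j Hi Hj.
  set (X := sumR p (fun k => sumR p (fun l => Ci k i * C k l * Ci l j))).
  assert (E1 : X = Ci j i).
  { unfold X; rewrite <- (sumR_delta p j (fun k => Ci k i) Hj).
    apply sumR_ext; intros k Hk.
    rewrite (sumR_ext _ _ (fun l => Ci k i * (C k l * Ci l j))) by (intros; ring).
    rewrite sumR_scal, (proj1 (HI k j Hk Hj)); ring. }
  assert (E2 : X = Ci i j).
  { unfold X; rewrite sumR_swap, <- (sumR_delta p i (fun l => Ci l j) Hi).
    apply sumR_ext; intros l Hl.
    rewrite (sumR_ext _ _ (fun k => C l k * Ci k i * Ci l j))
      by (intros k Hk; rewrite (HC k l) by auto; ring).
    rewrite sumR_scal_r, (proj1 (HI l i Hl Hi)); ring. }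
  congruence.
Qed.

Lemma pos_def_qform_nonneg p C x : pos_def p C -> 0 <= qform p C x.
Proof.
  intros [_ HP].
  destruct (Classical_Prop.classic (exists j, (j < p)%nat /\ x j <> 0)) as [Hx|Hx].
  - apply Rlt_le, HP, Hx.
  - assert (Hx0 : forall k, (k < p)%nat -> x k = 0).
    { intros k Hk; destruct (Req_dec (x k) 0); [assumption|exfalso; eauto]. }
    rewrite qform_matvec, (sumR_ext _ _ (fun _ => 0)), sumR_const; [lra|].
    intros i Hi; rewrite Hx0 by exact Hi; ring.
Qed.

Lemma inverse_qform_nonneg p C Ci x : pos_def p C -> is_inverse p C Ci ->
  0 <= qform p Ci x.
Proof.
  intros HP HI; set (y := matvec p Ci x).
  replace (qform p Ci x) with (qform p C y).
  - apply pos_def_qform_nonneg, HP.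
  - rewrite !qform_matvec; apply sumR_ext; intros i Hi.
    unfold y; rewrite (matvec_inverse_l p C Ci x HI i Hi); ring.
Qed.

(** * Critical points are real, and at most one exists *)

Lemma sq_lt_of_abs_lt (mu t : R) : Rabs t < mu -> t ^ 2 < mu ^ 2.
Proof. intros Ht; rewrite <- (pow2_abs t); pose proof (Rabs_pos t); nra. Qed.

Definition barrier_grad (mu t : R) : R := t / (mu ^ 2 - t ^ 2).

Lemma barrier_grad_strongly_monotone mu s t : Rabs s < mu -> Rabs t < mu ->
  (t - s) ^ 2 / mu ^ 2 <= (t - s) * (barrier_grad mu t - barrier_grad mu s).
Proof.
  intros Hs Ht; unfold barrier_grad.
  pose proof (sq_lt_of_abs_lt mu s Hs); pose proof (sq_lt_of_abs_lt mu t Ht).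
  assert (Hmu : 0 < mu ^ 2) by (pose proof (pow2_ge_0 s); lra).
  assert (Hmu0 : mu <> 0) by (intros ->; simpl in Hmu; lra).
  assert (Hprod : (mu ^ 2 - t ^ 2) * (mu ^ 2 - s ^ 2) <= mu ^ 2 * (mu ^ 2 + t * s)).
  { enough (t ^ 2 * s ^ 2 <= mu ^ 2 * (t ^ 2 + s ^ 2 + t * s)) by nra.
    assert (Hu : Rabs (t * s) <= mu ^ 2).
    { rewrite Rabs_mult; pose proof (Rabs_pos s); pose proof (Rabs_pos t); nra. }
    assert (Hsum : Rabs (t * s) <= t ^ 2 + s ^ 2 + t * s).
    { pose proof (pow2_ge_0 (t + s)).
      destruct (Rle_dec 0 (t * s)); [rewrite Rabs_right by lra|rewrite Rabs_left by lra]; nra. }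
    replace (t ^ 2 * s ^ 2) with (Rabs (t * s) * Rabs (t * s))
      by (rewrite <- Rabs_mult, Rabs_pos_eq; nra).
    pose proof (Rabs_pos (t * s)); nra. }
  replace ((t - s) * (t / (mu ^ 2 - t ^ 2) - s / (mu ^ 2 - s ^ 2)))
    with ((t - s) ^ 2 * ((mu ^ 2 + t * s) / ((mu ^ 2 - t ^ 2) * (mu ^ 2 - s ^ 2))))
    by (field; lra).
  unfold Rdiv; apply Rmult_le_compat_l; [apply pow2_ge_0|].
  apply (Rmult_le_reg_r ((mu ^ 2 - t ^ 2) * (mu ^ 2 - s ^ 2) * mu ^ 2)).
  { apply Rmult_lt_0_compat; [apply Rmult_lt_0_compat|]; lra. }
  replace (/ mu ^ 2 * ((mu ^ 2 - t ^ 2) * (mu ^ 2 - s ^ 2) * mu ^ 2))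
    with ((mu ^ 2 - t ^ 2) * (mu ^ 2 - s ^ 2)) by (field; lra).
  replace ((mu ^ 2 + t * s) * / ((mu ^ 2 - t ^ 2) * (mu ^ 2 - s ^ 2))
             * ((mu ^ 2 - t ^ 2) * (mu ^ 2 - s ^ 2) * mu ^ 2))
    with (mu ^ 2 * (mu ^ 2 + t * s)) by (field; lra).
  exact Hprod.
Qed.

Lemma psd_plus_monotone_eq0 p A (y e : nat -> R) : 0 <= qform p A y ->
  (forall j, (j < p)%nat -> matvec p A y j + e j = 0) ->
  (forall j, (j < p)%nat -> 0 <= y j * e j) ->
  (forall j, (j < p)%nat -> y j * e j = 0 -> y j = 0) ->
  forall j, (j < p)%nat -> y j = 0.
Proof.
  intros HA He Hpos Hdef j Hj.
  apply Hdef; [exact Hj|]; apply (sumR_nonneg_eq0 p (fun j => y j * e j)); [exact Hpos| |exact Hj].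
  assert (Hsum : qform p A y + sumR p (fun j => y j * e j) = 0).
  { rewrite qform_matvec, <- sumR_add, (sumR_ext _ _ (fun _ => 0)), sumR_const; [ring|].
    intros i Hi; rewrite <- Rmult_plus_distr_l, He by exact Hi; ring. }
  pose proof (sumR_nonneg p _ Hpos); lra.
Qed.

Definition grad_real p (Ci : nat -> nat -> R) (w : nat -> R) (mu tau : R) (x : nat -> R) j
  : R := matvec p Ci (fun k => x k - w k) j + barrier_grad mu (x j) / tau.

Lemma grad_real_unique p C Ci w mu tau x x' : pos_def p C -> is_inverse p C Ci -> 0 < tau ->
  (forall j, (j < p)%nat -> Rabs (x j) < mu /\ Rabs (x' j) < mu) ->
  (forall j, (j < p)%nat -> grad_real p Ci w mu tau x j = 0) ->
  (forall j, (j < p)%nat -> grad_real p Ci w mu tau x' j = 0) ->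
  forall j, (j < p)%nat -> x j = x' j.
Proof.
  intros HP HI Ht Hb Hx Hx' j Hj.
  set (e j := (barrier_grad mu (x j) - barrier_grad mu (x' j)) / tau).
  enough (Hd : forall j, (j < p)%nat -> x j - x' j = 0) by (specialize (Hd j Hj); lra).
  assert (Hmono : forall j, (j < p)%nat ->
            (x j - x' j) ^ 2 / mu ^ 2 / tau <= (x j - x' j) * e j).
  { intros i Hi; destruct (Hb i Hi) as [Hxi Hxi']; unfold e.
    pose proof (barrier_grad_strongly_monotone mu (x' i) (x i) Hxi' Hxi).
    unfold Rdiv; rewrite <- Rmult_assoc; apply Rmult_le_compat_r; [|exact H].
    left; apply Rinv_0_lt_compat, Ht. }
  assert (Hmu : 0 < mu) by (destruct (Hb j Hj) as [H _]; pose proof (Rabs_pos (x j)); lra).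
  assert (Hc : 0 < / mu ^ 2 / tau)
    by (apply Rdiv_lt_0_compat; [apply Rinv_0_lt_compat, pow_lt|]; lra).
  apply (psd_plus_monotone_eq0 p Ci (fun k => x k - x' k) e).
  - apply (inverse_qform_nonneg p C), HI; exact HP.
  - intros i Hi; pose proof (Hx i Hi); pose proof (Hx' i Hi); unfold grad_real, matvec, e in *.
    rewrite (sumR_ext _ _ (fun k => Ci i k * (x k - w k) - Ci i k * (x' k - w k)))
      by (intros; ring).
    rewrite sumR_sub; unfold Rdiv in *; lra.
  - intros i Hi; specialize (Hmono i Hi).
    pose proof (pow2_ge_0 (x i - x' i)); unfold Rdiv in *; nra.
  - intros i Hi E; specialize (Hmono i Hi); rewrite E in Hmono.
    destruct (Req_dec (x i - x' i) 0) as [|Hne]; [assumption|exfalso].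
    pose proof (Rsqr_pos_lt _ Hne); unfold Rsqr in *.
    replace ((x i - x' i) ^ 2 / mu ^ 2 / tau) with ((x i - x' i) * (x i - x' i) * (/ mu ^ 2 / tau))
      in Hmono by (unfold Rdiv; ring).
    nra.
Qed.

Definition barrierC (mu : R) (x : Complex.C) : Complex.C :=
  (2 * x / ((mu ^ 2)%R - x * x))%C.

Lemma dH_re_im p Ci w mu tau z j : symmetric p Ci -> (j < p)%nat ->
  fst (dH p Ci w mu tau z j)
    = 2 * matvec p Ci (fun k => fst (z k) - w k) j + / tau * fst (barrierC mu (z j)) /\
  snd (dH p Ci w mu tau z j)
    = 2 * matvec p Ci (fun k => snd (z k)) j + / tau * snd (barrierC mu (z j)).
Proof.
  intros HS Hj; unfold dH, barrierC, matvec; split;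
    [rewrite fst_Cplus, fst_Cplus, !fst_sumC|rewrite snd_Cplus, snd_Cplus, !snd_sumC];
    rewrite <- sumR_add, <- sumR_scal;
    ( match goal with |- ?a + ?b = ?c + ?d => assert (E : a = c); [|rewrite E; simpl; ring] end;
      apply sumR_ext; intros k Hk; rewrite (HS k j) by auto; destruct (z k); simpl; ring ).
Qed.

Lemma barrierC_im (mu x y : R) : 0 < mu ^ 2 - x ^ 2 + y ^ 2 ->
  snd (barrierC mu (x, y)) =
  y * (2 * (mu ^ 2 + x ^ 2 + y ^ 2) / ((mu ^ 2 - x ^ 2 + y ^ 2) ^ 2 + (2 * x * y) ^ 2)).
Proof.
  intros H; unfold barrierC, Complex.Cdiv, Complex.Cmult, Complex.Cinv,
    Complex.Cminus, Complex.Cplus, Complex.Copp; simpl.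
  field; simpl in H; nra.
Qed.

Lemma barrierC_real (mu x : R) : x ^ 2 < mu ^ 2 ->
  barrierC mu (x, 0) = (2 * barrier_grad mu x, 0).
Proof.
  intros H; unfold barrierC, barrier_grad, Complex.Cdiv, Complex.Cmult, Complex.Cinv,
    Complex.Cminus, Complex.Cplus, Complex.Copp; simpl in *.
  apply injective_projections; simpl; field; lra.
Qed.

Section Critical_points.

Variables (p : nat) (C Ci : nat -> nat -> R) (w : nat -> R) (mu tau : R).
Hypotheses (hC : pos_def p C) (hCi : is_inverse p C Ci) (htau : 0 < tau).

Let hS : symmetric p Ci := inverse_symmetric p C Ci (proj1 hC) hCi.

Lemma critical_im_eq0 z : inD p mu z ->
  (forall j, (j < p)%nat -> dH p Ci w mu tau z j = Complex.RtoC 0) ->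
  forall j, (j < p)%nat -> snd (z j) = 0.
Proof.
  intros HD HZ; unfold inD, Re in HD.
  set (y k := snd (z k)).
  set (den k := (mu ^ 2 - fst (z k) ^ 2 + y k ^ 2) ^ 2 + (2 * fst (z k) * y k) ^ 2).
  set (c k := / tau * ((mu ^ 2 + fst (z k) ^ 2 + y k ^ 2) / den k)).
  assert (Hre : forall k, (k < p)%nat -> 0 < mu ^ 2 - fst (z k) ^ 2 + y k ^ 2).
  { intros k Hk; pose proof (sq_lt_of_abs_lt _ _ (HD k Hk)); pose proof (pow2_ge_0 (y k)); lra. }
  assert (Hc : forall k, (k < p)%nat -> 0 < c k).
  { intros k Hk; specialize (Hre k Hk).
    assert (0 < den k) by (unfold den; pose proof (pow2_ge_0 (2 * fst (z k) * y k)); nra).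
    assert (0 < mu ^ 2 + fst (z k) ^ 2 + y k ^ 2)
      by (pose proof (pow2_ge_0 (y k)); pose proof (pow2_ge_0 (fst (z k))); lra).
    unfold c; apply Rmult_lt_0_compat; [apply Rinv_0_lt_compat, htau|apply Rdiv_lt_0_compat; lra]. }
  apply (psd_plus_monotone_eq0 p Ci y (fun k => y k * c k)).
  - exact (inverse_qform_nonneg p C Ci y hC hCi).
  - intros j Hj; pose proof (proj2 (dH_re_im p Ci w mu tau z j hS Hj)) as E.
    rewrite HZ in E by exact Hj; cbn [snd Complex.RtoC] in E.
    destruct (z j) as [xj yj] eqn:Ezj; rewrite barrierC_im in E.
    2:{ specialize (Hre j Hj); unfold y in Hre; rewrite Ezj in Hre; exact Hre. }
    unfold c, den, y; rewrite Ezj; simpl fst; simpl snd.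
    unfold Rdiv in *; lra.
  - intros j Hj; specialize (Hc j Hj); pose proof (pow2_ge_0 (y j)); simpl in *; nra.
  - intros j Hj E; specialize (Hc j Hj).
    replace (y j * (y j * c j)) with ((y j * y j) * c j) in E by ring.
    apply Rmult_integral in E; destruct E as [E|E]; [|lra].
    apply Rmult_integral in E; destruct E; assumption.
Qed.

Lemma critical_grad_real z : inD p mu z ->
  (forall j, (j < p)%nat -> dH p Ci w mu tau z j = Complex.RtoC 0) ->
  forall j, (j < p)%nat -> grad_real p Ci w mu tau (fun k => fst (z k)) j = 0.
Proof.
  intros HD HZ j Hj.
  assert (Hx : Rabs (fst (z j)) < mu) by exact (HD j Hj).
  pose proof (proj1 (dH_re_im p Ci w mu tau z j hS Hj)) as E.
  rewrite HZ in E by exact Hj; cbn [fst Complex.RtoC] in E.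
  replace (z j) with ((fst (z j), 0) : Complex.C) in E
    by (rewrite <- (critical_im_eq0 z HD HZ j Hj); destruct (z j); reflexivity).
  rewrite barrierC_real in E by exact (sq_lt_of_abs_lt _ _ Hx).
  unfold grad_real; cbn [fst] in E; unfold Rdiv; lra.
Qed.

Lemma grad_real_critical (x : nat -> R) j : (j < p)%nat -> Rabs (x j) < mu ->
  grad_real p Ci w mu tau x j = 0 ->
  dH p Ci w mu tau (fun k => (x k, 0)) j = Complex.RtoC 0.
Proof.
  intros Hj Hx HE; destruct (dH_re_im p Ci w mu tau (fun k => (x k, 0)) j hS Hj) as [E1 E2].
  rewrite barrierC_real in E1, E2 by exact (sq_lt_of_abs_lt _ _ Hx).
  apply injective_projections; rewrite ?E1, ?E2; simpl.
  - unfold grad_real, Rdiv in *; lra.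
  - unfold matvec; rewrite (sumR_ext _ _ (fun _ => 0)), sumR_const by (intros; ring); ring.
Qed.

End Critical_points.

(** * Existence of a real solution *)

Section Resolvent.

Variables (mu tau lam : R).
Hypotheses (hmu : 0 < mu) (htau : 0 < tau) (hlam : 0 <= lam).

Definition resolvent (t : R) : R := lam * t + barrier_grad mu t / tau.

Lemma resolvent_strongly_increasing s t : Rabs s < mu -> Rabs t < mu -> s <= t ->
  (lam + / (tau * mu ^ 2)) * (t - s) <= resolvent t - resolvent s.
Proof.
  intros Hs Ht Hst; unfold resolvent.
  pose proof (barrier_grad_strongly_monotone mu s t Hs Ht) as Hg.
  assert (Hgap : (t - s) / mu ^ 2 <= barrier_grad mu t - barrier_grad mu s).
  { destruct (Req_dec s t) as [->|Hne]; [unfold Rdiv; rewrite Rminus_diag; lra|].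
    apply (Rmult_le_reg_l (t - s)); [lra|].
    replace ((t - s) * ((t - s) / mu ^ 2)) with ((t - s) ^ 2 / mu ^ 2) by (unfold Rdiv; ring).
    exact Hg. }
  replace ((lam + / (tau * mu ^ 2)) * (t - s))
    with (lam * (t - s) + ((t - s) / mu ^ 2) / tau) by (field; split; lra).
  replace (lam * t + barrier_grad mu t / tau - (lam * s + barrier_grad mu s / tau))
    with (lam * (t - s) + (barrier_grad mu t - barrier_grad mu s) / tau) by (unfold Rdiv; ring).
  apply Rplus_le_compat_l, Rmult_le_compat_r; [left; apply Rinv_0_lt_compat|]; assumption.
Qed.

Lemma resolvent_odd t : resolvent (- t) = - resolvent t.
Proof. unfold resolvent, barrier_grad; replace ((- t) ^ 2) with (t ^ 2) by ring; unfold Rdiv; ring. Qed.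

Lemma resolvent_continuous t : Rabs t < mu -> continuity_pt resolvent t.
Proof.
  intros Ht; apply derivable_continuous_pt.
  pose proof (sq_lt_of_abs_lt mu t Ht).
  exists (lam + / tau * ((mu ^ 2 + t ^ 2) / (mu ^ 2 - t ^ 2) ^ 2)).
  apply is_derive_Reals; unfold resolvent, barrier_grad.
  auto_derive; [simpl in *; lra|field; simpl in *; split; lra].
Qed.

(* Near [mu], [barrier_grad mu (mu - d) >= 1 / (4 d)]. *)
Lemma resolvent_unbounded c : exists b, 0 <= b < mu /\ c < resolvent b.
Proof.
  set (d := Rmin (mu / 2) (/ (4 * tau * (Rabs c + 1)))).
  assert (Hc : 0 < Rabs c + 1) by (pose proof (Rabs_pos c); lra).
  assert (Hd0 : 0 < d) by (apply Rmin_pos; [lra|apply Rinv_0_lt_compat; nra]).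
  assert (Hd1 : d <= mu / 2) by apply Rmin_l.
  assert (Hd2 : d <= / (4 * tau * (Rabs c + 1))) by apply Rmin_r.
  exists (mu - d); split; [lra|].
  unfold resolvent, barrier_grad.
  replace (mu ^ 2 - (mu - d) ^ 2) with (d * (2 * mu - d)) by ring.
  assert (H1 : / (4 * d) <= (mu - d) / (d * (2 * mu - d))).
  { apply (Rmult_le_reg_r (4 * d * (d * (2 * mu - d)))).
    { apply Rmult_lt_0_compat; [lra|apply Rmult_lt_0_compat; lra]. }
    replace (/ (4 * d) * (4 * d * (d * (2 * mu - d)))) with (d * (2 * mu - d)) by (field; lra).
    replace ((mu - d) / (d * (2 * mu - d)) * (4 * d * (d * (2 * mu - d))))
      with (4 * d * (mu - d)) by (field; lra).
    nra. }
  assert (H2 : Rabs c + 1 <= / (4 * d) / tau).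
  { apply (Rmult_le_reg_r (4 * d * tau)); [nra|].
    replace (/ (4 * d) / tau * (4 * d * tau)) with 1 by (field; lra).
    apply (Rmult_le_compat_r (4 * tau * (Rabs c + 1))) in Hd2; [|nra].
    rewrite Rinv_l in Hd2 by nra; nra. }
  assert (H3 : / (4 * d) / tau <= (mu - d) / (d * (2 * mu - d)) / tau).
  { unfold Rdiv; apply Rmult_le_compat_r; [left; apply Rinv_0_lt_compat; lra|exact H1]. }
  pose proof (Rle_abs c); assert (0 <= lam * (mu - d)) by (apply Rmult_le_pos; lra).
  lra.
Qed.

Lemma resolvent_surjective c : exists t, Rabs t < mu /\ resolvent t = c.
Proof.
  assert (Hm : 0 < lam + / (tau * mu ^ 2))
    by (pose proof (Rinv_0_lt_compat (tau * mu ^ 2) ltac:(apply Rmult_lt_0_compat; [lra|apply pow_lt, hmu])); lra).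
  destruct (resolvent_unbounded c) as [b1 [Hb1 E1]].
  destruct (resolvent_unbounded (- c)) as [b2 [Hb2 E2]].
  set (b := Rmax b1 b2).
  assert (Hb : 0 <= b < mu) by (unfold b; apply Rmax_case; lra).
  assert (Hmono : forall s, 0 <= s <= b -> resolvent s <= resolvent b).
  { intros s Hs; pose proof (resolvent_strongly_increasing s b
      ltac:(rewrite Rabs_right; lra) ltac:(rewrite Rabs_right; lra) ltac:(lra)); nra. }
  pose proof (Hmono b1 ltac:(unfold b; pose proof (Rmax_l b1 b2); lra)).
  pose proof (Hmono b2 ltac:(unfold b; pose proof (Rmax_r b1 b2); lra)).
  assert (Hlow : resolvent (- b) < c) by (rewrite resolvent_odd; lra).
  assert (Hb0 : b <> 0) by (intros E; rewrite E in *; rewrite Ropp_0 in Hlow; lra).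
  destruct (Ranalysis5.IVT_interv (fun t => resolvent t - c) (- b) b) as [t [Htb Ht0]].
  - intros a Ha; apply continuity_pt_minus; [apply resolvent_continuous|apply continuity_pt_const].
    + apply Rabs_def1; lra.
    + intros u v; reflexivity.
  - lra.
  - lra.
  - lra.
  - exists t; split; [apply Rabs_def1; lra|lra].
Qed.

Definition resolvent_inv (c : R) : R :=
  proj1_sig (constructive_indefinite_description _ (resolvent_surjective c)).

Lemma resolvent_inv_spec c : Rabs (resolvent_inv c) < mu /\ resolvent (resolvent_inv c) = c.
Proof. unfold resolvent_inv; destruct (constructive_indefinite_description _ _); exact a. Qed.

Lemma resolvent_inv_lipschitz a b :
  (lam + / (tau * mu ^ 2)) * Rabs (resolvent_inv a - resolvent_inv b) <= Rabs (a - b).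
Proof.
  destruct (resolvent_inv_spec a) as [Ha Ea], (resolvent_inv_spec b) as [Hb Eb].
  set (s := resolvent_inv a) in *; set (t := resolvent_inv b) in *.
  assert (Hm : 0 < / (tau * mu ^ 2))
    by (apply Rinv_0_lt_compat, Rmult_lt_0_compat; [lra|apply pow_lt, hmu]).
  destruct (Rle_dec t s).
  - pose proof (resolvent_strongly_increasing t s Hb Ha r) as H; rewrite Ea, Eb in H.
    rewrite !Rabs_right by nra; lra.
  - pose proof (resolvent_strongly_increasing s t Ha Hb ltac:(lra)) as H; rewrite Ea, Eb in H.
    rewrite !Rabs_left1 by nra; lra.
Qed.

End Resolvent.

Definition sqnorm (p : nat) (d : nat -> R) : R := sumR p (fun j => d j ^ 2).

Lemma sqnorm_nonneg p d : 0 <= sqnorm p d.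
Proof. apply sumR_nonneg; intros; apply pow2_ge_0. Qed.

Lemma abs_le_sqrt_sqnorm p d k : (k < p)%nat -> Rabs (d k) <= sqrt (sqnorm p d).
Proof.
  intros Hk; rewrite <- (sqrt_pow2 (Rabs (d k))) by apply Rabs_pos.
  apply sqrt_le_1_alt; rewrite pow2_abs.
  apply (sumR_term_le p (fun j => d j ^ 2)); [intros; apply pow2_ge_0|exact Hk].
Qed.

Lemma sqnorm_le_const p d c : (forall k, (k < p)%nat -> Rabs (d k) <= c) ->
  sqnorm p d <= INR p * c ^ 2.
Proof.
  intros H; unfold sqnorm; rewrite <- sumR_const; apply sumR_le; intros k Hk.
  rewrite <- pow2_abs; apply pow_incr; split; [apply Rabs_pos|apply H, Hk].
Qed.

Definition abs_row_bound (p : nat) (A : nat -> nat -> R) : R :=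
  sumR p (fun j => (sumR p (fun k => Rabs (A j k))) ^ 2).

Lemma sqnorm_matvec_le p A d : sqnorm p (matvec p A d) <= abs_row_bound p A * sqnorm p d.
Proof.
  unfold sqnorm at 1, abs_row_bound; rewrite <- sumR_scal_r; apply sumR_le; intros j _.
  set (s := sqrt (sqnorm p d)).
  assert (Hs : s ^ 2 = sqnorm p d) by (apply pow2_sqrt, sqnorm_nonneg).
  assert (H : Rabs (matvec p A d j) <= sumR p (fun k => Rabs (A j k)) * s).
  { eapply Rle_trans; [apply sumR_abs|]; rewrite <- sumR_scal_r.
    apply sumR_le; intros k Hk; rewrite Rabs_mult.
    apply Rmult_le_compat_l; [apply Rabs_pos|apply abs_le_sqrt_sqnorm, Hk]. }
  rewrite <- Hs, <- Rpow_mult_distr, <- pow2_abs.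
  apply pow_incr; split; [apply Rabs_pos|exact H].
Qed.

Fixpoint iterate (T : (nat -> R) -> nat -> R) (u0 : nat -> R) (n : nat) : nat -> R :=
  match n with O => u0 | S n => T (iterate T u0 n) end.

Section Banach.

Variables (p : nat) (T : (nat -> R) -> nat -> R) (q : R).
Hypotheses (hq : 0 <= q < 1)
  (hT : forall u v, sqnorm p (fun j => T u j - T v j) <= q * sqnorm p (fun j => u j - v j)).

Let u := iterate T (fun _ => 0).
Let r := sqrt q.
Let B := sqrt (sqnorm p (fun j => u 1%nat j - u 0%nat j)).
Let c n := B * r ^ n / (1 - r).

Let r_bounds : 0 <= r < 1.
Proof. split; [apply sqrt_pos|rewrite <- sqrt_1; apply sqrt_lt_1_alt; lra]. Qed.

Let c_nonneg n : 0 <= c n.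
Proof.
  pose proof r_bounds; unfold c; apply Rdiv_le_0_compat; [|lra].
  apply Rmult_le_pos; [apply sqrt_pos|apply pow_le; lra].
Qed.

Let c_succ_le n : c (S n) <= c n.
Proof.
  pose proof r_bounds; unfold c, Rdiv; simpl pow.
  apply Rmult_le_compat_r; [left; apply Rinv_0_lt_compat; lra|].
  assert (0 <= B * r ^ n) by (apply Rmult_le_pos; [apply sqrt_pos|apply pow_le; lra]).
  nra.
Qed.

Lemma iterate_step_bound n j : (j < p)%nat -> Rabs (u (S n) j - u n j) <= B * r ^ n.
Proof.
  intros Hj.
  assert (Hn : forall n, sqnorm p (fun j => u (S n) j - u n j)
                         <= q ^ n * sqnorm p (fun j => u 1%nat j - u 0%nat j)).
  { induction n0 as [|n0 IH]; [simpl; lra|].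
    eapply Rle_trans; [apply (hT (u (S n0)) (u n0))|]; simpl pow; rewrite Rmult_assoc.
    apply Rmult_le_compat_l; [lra|exact IH]. }
  eapply Rle_trans; [apply (abs_le_sqrt_sqnorm p (fun j => u (S n) j - u n j) j Hj)|].
  eapply Rle_trans; [apply sqrt_le_1_alt, Hn|].
  rewrite sqrt_mult_alt by (apply pow_le; lra).
  replace (sqrt (q ^ n)) with (r ^ n); [unfold B; lra|].
  unfold r; induction n as [|n IH]; simpl; [symmetry; apply sqrt_1|].
  rewrite sqrt_mult_alt, IH by lra; reflexivity.
Qed.

Lemma iterate_tail_bound n m j : (j < p)%nat -> (n <= m)%nat -> Rabs (u m j - u n j) <= c n.
Proof.
  intros Hj Hnm; pose proof r_bounds.
  assert (HB : 0 <= B) by apply sqrt_pos.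
  assert (Hsum : forall k, Rabs (u (n + k)%nat j - u n j) <= B * r ^ n * (1 - r ^ k) / (1 - r)).
  { induction k as [|k IH].
    - rewrite Nat.add_0_r, Rminus_diag, Rabs_R0; simpl.
      replace (B * r ^ n * (1 - 1) / (1 - r)) with 0 by (field; lra); lra.
    - replace (n + S k)%nat with (S (n + k)) by lia.
      replace (u (S (n + k)) j - u n j)
        with ((u (S (n + k)) j - u (n + k)%nat j) + (u (n + k)%nat j - u n j)) by ring.
      eapply Rle_trans; [apply Rabs_triang|].
      pose proof (iterate_step_bound (n + k) j Hj) as Hs; rewrite pow_add in Hs.
      replace (B * r ^ n * (1 - r ^ S k) / (1 - r))
        with (B * (r ^ n * r ^ k) + B * r ^ n * (1 - r ^ k) / (1 - r)) by (simpl; field; lra).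
      lra. }
  replace m with (n + (m - n))%nat by lia.
  eapply Rle_trans; [apply Hsum|]; unfold c, Rdiv.
  apply Rmult_le_compat_r; [left; apply Rinv_0_lt_compat; lra|].
  assert (0 <= r ^ (m - n)) by (apply pow_le; lra).
  assert (0 <= B * r ^ n) by (apply Rmult_le_pos; [exact HB|apply pow_le; lra]).
  nra.
Qed.

Lemma iterate_tail_vanishes eps : 0 < eps -> exists N, forall n, (N <= n)%nat -> c n < eps.
Proof.
  intros Heps; pose proof r_bounds.
  assert (HB : 0 <= B) by apply sqrt_pos.
  destruct (pow_lt_1_zero r ltac:(rewrite Rabs_right; lra) (eps * (1 - r) / (B + 1)))
    as [N HN]; [apply Rdiv_lt_0_compat; nra|].
  exists N; intros n Hn; specialize (HN n Hn).
  rewrite Rabs_right in HN by (apply Rle_ge, pow_le; lra).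
  unfold c; apply (Rmult_lt_reg_r (1 - r)); [lra|].
  unfold Rdiv; rewrite Rmult_assoc, Rinv_l, Rmult_1_r by lra.
  apply (Rmult_lt_compat_r (B + 1)) in HN; [|lra].
  replace (eps * (1 - r) / (B + 1) * (B + 1)) with (eps * (1 - r)) in HN by (field; lra).
  assert (0 <= r ^ n) by (apply pow_le; lra); nra.
Qed.

Lemma iterate_limit : exists L : nat -> R,
  forall n j, (j < p)%nat -> Rabs (L j - u n j) <= c n.
Proof.
  assert (HCauchy : forall j, (j < p)%nat -> Cauchy_crit (fun n => u n j)).
  { intros j Hj eps Heps; destruct (iterate_tail_vanishes eps Heps) as [N HN].
    exists N; intros n m Hn Hm; unfold R_dist.
    destruct (Nat.le_ge_cases n m).
    - rewrite Rabs_minus_sym; eapply Rle_lt_trans; [apply iterate_tail_bound; auto|apply HN; lia].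
    - eapply Rle_lt_trans; [apply iterate_tail_bound; auto|apply HN; lia]. }
  exists (fun j => match Compare_dec.lt_dec j p with
                   | left Hj => proj1_sig (R_complete _ (HCauchy j Hj))
                   | right _ => 0 end).
  intros n j Hj; destruct (Compare_dec.lt_dec j p) as [Hj'|]; [|lia].
  destruct (R_complete _ (HCauchy j Hj')) as [L HL]; simpl.
  destruct (Rle_dec (Rabs (L - u n j)) (c n)) as [|Hne]; [assumption|exfalso].
  destruct (HL (Rabs (L - u n j) - c n)) as [N HN]; [lra|].
  specialize (HN (max N n) ltac:(lia)); unfold R_dist in HN.
  pose proof (iterate_tail_bound n (max N n) j Hj ltac:(lia)).
  pose proof (Rabs_triang (L - u (max N n) j) (u (max N n) j - u n j)).
  replace (L - u (max N n) j + (u (max N n) j - u n j)) with (L - u n j) in * by ring.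
  rewrite Rabs_minus_sym in HN; lra.
Qed.

Lemma contraction_fixed_point : exists L : nat -> R, forall j, (j < p)%nat -> T L j = L j.
Proof.
  destruct iterate_limit as [L HL]; exists L; intros j Hj.
  pose proof (pos_INR p) as Hp.
  assert (Hbound : forall n, Rabs (T L j - L j) <= (INR p + 2) * c n).
  { intros n; specialize (c_nonneg n) as Hc.
    assert (HT : Rabs (T L j - T (u n) j) <= (INR p + 1) * c n).
    { eapply Rle_trans; [apply (abs_le_sqrt_sqnorm p (fun k => T L k - T (u n) k)), Hj|].
      rewrite <- (sqrt_pow2 ((INR p + 1) * c n)) by nra; apply sqrt_le_1_alt.
      eapply Rle_trans; [apply hT|].
      eapply Rle_trans; [apply Rmult_le_compat_r; [apply sqnorm_nonneg|]; instantiate (1 := 1); lra|].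
      rewrite Rmult_1_l; eapply Rle_trans; [apply sqnorm_le_const; intros k Hk; apply HL, Hk|].
      rewrite Rpow_mult_distr; apply Rmult_le_compat_r; [apply pow2_ge_0|nra]. }
    assert (Hu : Rabs (T (u n) j - L j) <= c n).
    { rewrite Rabs_minus_sym; change (T (u n)) with (u (S n)).
      eapply Rle_trans; [apply HL, Hj|apply c_succ_le]. }
    pose proof (Rabs_triang (T L j - T (u n) j) (T (u n) j - L j)).
    replace (T L j - T (u n) j + (T (u n) j - L j)) with (T L j - L j) in * by ring.
    lra. }
  destruct (Req_dec (T L j - L j) 0) as [|Hne]; [lra|exfalso].
  pose proof (Rabs_pos_lt _ Hne) as Hpos.
  destruct (iterate_tail_vanishes (Rabs (T L j - L j) / (INR p + 2))) as [N HN];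
    [apply Rdiv_lt_0_compat; lra|].
  specialize (HN N (Nat.le_refl N)); specialize (Hbound N).
  apply (Rmult_lt_compat_r (INR p + 2)) in HN; [|lra].
  replace (Rabs (T L j - L j) / (INR p + 2) * (INR p + 2)) with (Rabs (T L j - L j)) in HN
    by (field; lra).
  lra.
Qed.

End Banach.

Section Real_solution.

Variables (p : nat) (C Ci : nat -> nat -> R) (w : nat -> R) (mu tau lam : R).
Hypotheses (hC : pos_def p C) (hCi : is_inverse p C Ci)
  (hmu : 0 < mu) (htau : 0 < tau) (hlam : 0 <= lam).

(* A fixed point [x] satisfies [resolvent x_j = lam x_j - [C^-1 (x - w)]_j],
   i.e. [grad_real x = 0]. *)
Definition resolvent_step (x : nat -> R) (j : nat) : R :=
  resolvent_inv mu tau lam hmu htau hlam (lam * x j - matvec p Ci (fun k => x k - w k) j).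

Lemma resolvent_step_contraction x x' :
  (lam + / (tau * mu ^ 2)) ^ 2 * sqnorm p (fun j => resolvent_step x j - resolvent_step x' j)
  <= (lam ^ 2 + abs_row_bound p Ci) * sqnorm p (fun j => x j - x' j).
Proof.
  set (m := / (tau * mu ^ 2)).
  assert (Hm : 0 < m) by (apply Rinv_0_lt_compat, Rmult_lt_0_compat; [lra|apply pow_lt, hmu]).
  set (d j := x j - x' j).
  set (e j := lam * d j - matvec p Ci d j).
  assert (Hcoord : forall j,
    (lam + m) ^ 2 * (resolvent_step x j - resolvent_step x' j) ^ 2 <= e j ^ 2).
  { intros j; unfold resolvent_step.
    pose proof (resolvent_inv_lipschitz mu tau lam hmu htau hlam
      (lam * x j - matvec p Ci (fun k => x k - w k) j)
      (lam * x' j - matvec p Ci (fun k => x' k - w k) j)) as L.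
    replace (lam * x j - matvec p Ci (fun k => x k - w k) j
             - (lam * x' j - matvec p Ci (fun k => x' k - w k) j)) with (e j) in L.
    2:{ unfold e, d, matvec.
        rewrite (sumR_ext p (fun k => Ci j k * (x k - x' k))
                   (fun k => Ci j k * (x k - w k) - Ci j k * (x' k - w k))) by (intros; ring).
        rewrite sumR_sub; ring. }
    rewrite <- (pow2_abs (e j)), <- (pow2_abs (_ - _)), <- Rpow_mult_distr.
    apply pow_incr; split; [apply Rmult_le_pos; [lra|apply Rabs_pos]|exact L]. }
  assert (Hexpand : sqnorm p e
                    = lam ^ 2 * sqnorm p d - 2 * lam * qform p Ci d + sqnorm p (matvec p Ci d)).
  { unfold sqnorm; rewrite qform_matvec, <- !sumR_scal, <- sumR_sub, <- sumR_add.
    apply sumR_ext; intros j _; unfold e; ring. }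
  pose proof (sqnorm_matvec_le p Ci d).
  pose proof (inverse_qform_nonneg p C Ci d hC hCi).
  assert (0 <= 2 * lam * qform p Ci d) by (apply Rmult_le_pos; lra).
  unfold sqnorm at 1; rewrite <- sumR_scal.
  eapply Rle_trans; [apply sumR_le; intros j _; apply Hcoord|].
  fold (sqnorm p e); fold d; lra.
Qed.

End Real_solution.

Lemma real_solution_exists p C Ci w mu tau :
  pos_def p C -> is_inverse p C Ci -> 0 < mu -> 0 < tau ->
  exists x : nat -> R, (forall j, (j < p)%nat -> Rabs (x j) < mu) /\
    (forall j, (j < p)%nat -> grad_real p Ci w mu tau x j = 0).
Proof.
  intros hC hCi hmu htau.
  set (m := / (tau * mu ^ 2)).
  assert (Hm : 0 < m) by (apply Rinv_0_lt_compat, Rmult_lt_0_compat; [lra|apply pow_lt, hmu]).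
  set (K := abs_row_bound p Ci).
  assert (HK : 0 <= K) by (apply sumR_nonneg; intros; apply pow2_ge_0).
  (* [lam] is chosen so that [2 lam m > K], i.e. [lam^2 + K < (lam + m)^2]. *)
  set (lam := K / (2 * m) + 1).
  assert (Hlam : 1 <= lam) by (assert (0 <= K / (2 * m)) by (apply Rdiv_le_0_compat; lra); unfold lam; lra).
  set (hlam := Rle_trans _ _ _ Rle_0_1 Hlam).
  set (q := (lam ^ 2 + K) / (lam + m) ^ 2).
  assert (Hq : 0 <= q < 1).
  { assert (E : 2 * lam * m = K + 2 * m) by (unfold lam; field; lra).
    unfold q; split; [apply Rdiv_le_0_compat; nra|].
    apply Rlt_div_l; nra. }
  destruct (contraction_fixed_point p (resolvent_step p Ci w mu tau lam hmu htau hlam) q Hq)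
    as [x Hx].
  { intros u v.
    pose proof (resolvent_step_contraction p C Ci w mu tau lam hC hCi hmu htau hlam u v) as H.
    fold m K in H; unfold q.
    apply (Rmult_le_reg_l ((lam + m) ^ 2)); [nra|].
    replace ((lam + m) ^ 2 * ((lam ^ 2 + K) / (lam + m) ^ 2 * sqnorm p (fun j => u j - v j)))
      with ((lam ^ 2 + K) * sqnorm p (fun j => u j - v j)) by (field; nra).
    exact H. }
  exists x; split; intros j Hj.
  - rewrite <- (Hx j Hj); apply resolvent_inv_spec.
  - pose proof (proj2 (resolvent_inv_spec mu tau lam hmu htau hlam
      (lam * x j - matvec p Ci (fun k => x k - w k) j))) as E.
    fold (resolvent_step p Ci w mu tau lam hmu htau hlam x j) in E.
    rewrite Hx in E by exact Hj.
    unfold resolvent in E; unfold grad_real; lra.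
Qed.

Lemma critical_dH_eq0 p Ci w mu tau z : 0 < tau -> inD p mu z ->
  is_critical p (H_tau p Ci w mu tau) z ->
  forall j, (j < p)%nat -> dH p Ci w mu tau z j = Complex.RtoC 0.
Proof.
  intros Ht Hz Hcrit j Hj.
  exact (has_cpderiv_unique _ _ _ _ _ (H_tau_has_cpderiv p Ci w mu tau z j Hj Ht (Hz j Hj))
           (Hcrit j Hj)).
Qed.

Lemma grad_real_cubic p Ci w mu tau x j : 0 < tau -> Rabs (x j) < mu ->
  grad_real p Ci w mu tau x j = 0 ->
  (mu ^ 2 - x j ^ 2) * sumR p (fun k => Ci j k * (w k - x k)) - x j / tau = 0.
Proof.
  intros Ht Hx E; pose proof (sq_lt_of_abs_lt _ _ Hx).
  unfold grad_real, matvec, barrier_grad in E.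
  rewrite (sumR_ext _ _ (fun k => -1 * (Ci j k * (x k - w k)))) by (intros; ring).
  rewrite sumR_scal.
  replace (sumR p (fun k => Ci j k * (x k - w k)))
    with (- (x j / (mu ^ 2 - x j ^ 2) / tau)) by lra.
  field; lra.
Qed.

Theorem theorem1 (p : nat) (C Ci : nat -> nat -> R) (w : nat -> R) (mu tau : R)
  (hC : pos_def p C) (hCi : is_inverse p C Ci) (hmu : 0 < mu) (htau : 0 < tau) :
  exists u : nat -> Cx,
    (inD p mu u /\ is_critical p (H_tau p Ci w mu tau) u) /\
    (forall z : nat -> Cx, inD p mu z -> is_critical p (H_tau p Ci w mu tau) z ->
       forall j, (j < p)%nat -> z j = u j) /\
    (forall j, (j < p)%nat -> Im (u j) = 0) /\
    (forall j, (j < p)%nat ->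
       (mu ^ 2 - Re (u j) ^ 2) * sumR p (fun k => Ci j k * (w k - Re (u k)))
       - Re (u j) / tau = 0).
Proof.
  destruct (real_solution_exists p C Ci w mu tau hC hCi hmu htau) as [x [Hxmu Hx]].
  exists (fun k => (x k, 0)); split; [split|split; [|split]].
  - exact Hxmu.
  - intros j Hj; change (Defs.RtoC 0) with (Complex.RtoC 0).
    rewrite <- (grad_real_critical p C Ci w mu tau hC hCi x j Hj (Hxmu j Hj) (Hx j Hj)).
    exact (H_tau_has_cpderiv p Ci w mu tau (fun k => (x k, 0)) j Hj htau (Hxmu j Hj)).
  - intros z Hz Hcrit j Hj.
    pose proof (critical_dH_eq0 p Ci w mu tau z htau Hz Hcrit) as HdH.
    pose proof (critical_im_eq0 p C Ci w mu tau hC hCi htau z Hz HdH j Hj) as Him.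
    assert (Hre : fst (z j) = x j).
    { apply (grad_real_unique p C Ci w mu tau (fun k => fst (z k)) x hC hCi htau);
        [intros k Hk; exact (conj (Hz k Hk) (Hxmu k Hk))| |exact Hx|exact Hj].
      exact (critical_grad_real p C Ci w mu tau hC hCi htau z Hz HdH). }
    rewrite <- Hre, <- Him; destruct (z j); reflexivity.
  - reflexivity.
  - intros j Hj; exact (grad_real_cubic p Ci w mu tau x j htau (Hxmu j Hj) (Hx j Hj)).
Qed.
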